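(* Let $\mathcal C$ be a $G$-category and $(P,\phi)\colon\mathcal C\to\mathcal C/G$ the canonical functor. The pullup functor $N\mapsto N\circ P$ (with the invariance adjuster induced from $\phi$) induces an isomorphism of categories $\operatorname{Mod}(\mathcal C/G)\to\operatorname{Mod}^G\mathcal C$.
   Context: $\Bbbk$ is a commutative ring; all categories and functors are $\Bbbk$-linear; $G$ is a group; a $G$-category is a category with a group homomorphism $G\to\operatorname{Aut}$, $\alpha\mapsto A_\alpha$, written $\alpha x,\alpha f$. An invariance adjuster of a functor $F$ out of a $G$-category is a family of natural isos $\phi_\alpha\colon F\to FA_\alpha$ with $\phi_1=\mathrm{id}$ and $(\phi_\beta A_\alpha)\phi_\alpha=\phi_{\beta\alpha}$; $(F,\phi)$ is a $G$-invariant functor; morphisms are natural transformations $\eta$ with $(\eta A_\alpha)\phi_\alpha=\phi'_\alpha\eta$. $\operatorname{Mod}\mathcal D$ is the category of contravariant functors $\mathcal D\to\operatorname{Mod}\Bbbk$. A $G$-invariant $\mathcal C$-module is a $\mathcal C$-module regarded as a $G$-invariant functor $\mathcal C^{op}\to\operatorname{Mod}\Bbbk$ (with $G$ acting on $\mathcal C^{op}$ by the same automorphisms); $\operatorname{Mod}^G\mathcal C$ denotes the category of $G$-invariant $\mathcal C$-modules with morphisms of $G$-invariant functors. Orbit category $\mathcal C/G$: objects of $\mathcal C$; morphisms $x\to y$ are row- and column-finite families $(f_{\beta,\alpha})_{(\alpha,\beta)\in G\times G}$, $f_{\beta,\alpha}\in\mathcal C(\alpha x,\beta y)$, with $f_{\gamma\beta,\gamma\alpha}=\gamma(f_{\beta,\alpha})$;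 composition $(gf)_{\beta,\alpha}=\sum_\gamma g_{\beta,\gamma}f_{\gamma,\alpha}$. $Px=x$, $P(f)=(\delta_{\alpha,\beta}\alpha f)$, $\phi_{\mu,x}=(\delta_{\alpha,\beta\mu}\mathrm{id}_{\alpha x})_{(\alpha,\beta)}\in(\mathcal C/G)(Px,P\mu x)$. *)

From HB Require Import structures.
From mathcomp Require Import all_boot all_algebra.

Set Implicit Arguments.
Unset Strict Implicit.
Unset Printing Implicit Defensive.

Import GRing.Theory.
Local Open Scope ring_scope.

Record kcat (k : comPzRingType) := KCat {
  ob : Type;
  chom : ob -> ob -> lmodType k;
  idm : forall x, chom x x;
  comp : forall x y z, chom y z -> chom x y -> chom x z;
  compA : forall x y z w (h : chom z w) (g : chom y z) (f : chom x y),
      comp h (comp g f) = comp (comp h g) f;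
  comp1m : forall x y (f : chom x y), comp (idm y) f = f;
  compm1 : forall x y (f : chom x y), comp f (idm x) = f;
  compDl : forall x y z (c : k) (g1 g2 : chom y z) (f : chom x y),
      comp (c *: g1 + g2) f = c *: comp g1 f + comp g2 f;
  compDr : forall x y z (c : k) (g : chom y z) (f1 f2 : chom x y),
      comp g (c *: f1 + f2) = c *: comp g f1 + comp g f2 }.
Arguments idm {k} C x : rename.
Arguments comp {k} C {x y z} : rename.
Arguments chom {k} C : rename.

Definition castH (k : comPzRingType) (C : kcat k) (x x' y y' : ob C)
    (ex : x = x') (ey : y = y') (f : chom C x y) : chom C x' y' :=
  match ex in _ = x1, ey in _ = y1 return chom C x1 y1 with
  | erefl, erefl => f end.

Definition castV (T : Type) (k : comPzRingType) (V : T -> lmodType k)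
    (a b : T) (e : a = b) (v : V a) : V b :=
  match e in _ = b1 return V b1 with erefl => v end.

(* G-categories: a group homomorphism G -> Aut(C), alpha |-> A_alpha,  *)
(* written alpha x, alpha f.  The equalities A_1 = Id and              *)
(* A_(beta alpha) = A_beta A_alpha hold on objects up to Leibniz        *)
(* equality, and on morphisms up to the induced transport.             *)
Record gcat (k : comPzRingType) (G : groupType) (C : kcat k) := GCat {
  act : G -> ob C -> ob C;
  acth : forall (a : G) x y, chom C x y -> chom C (act a x) (act a y);
  acth_lin : forall a x y (c : k) (f g : chom C x y),
      acth a (c *: f + g) = c *: acth a f + acth a g;
  acth_id : forall a x, acth a (idm C x) = idm C (act a x);
  acth_comp : forall a x y z (g : chom C y z) (f : chom C x y),
      acth a (comp C g f) = comp C (acth a g) (acth a f);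
  act_one : forall x, act 1%g x = x;
  act_mul : forall (a b : G) x, act (b * a)%g x = act b (act a x);
  acth_one : forall x y (f : chom C x y),
      acth 1%g f = castH (esym (act_one x)) (esym (act_one y)) f;
  acth_mul : forall (a b : G) x y (f : chom C x y),
      acth (b * a)%g f =
      castH (esym (act_mul a b x)) (esym (act_mul a b y)) (acth b (acth a f)) }.
Arguments act {k G C} A a x : rename.
Arguments acth {k G C} A a {x y} : rename.
Arguments act_mul {k G C} A a b x : rename.
Arguments act_one {k G C} A x : rename.

Section Orbit.
Variables (k : comPzRingType) (G : groupType) (C : kcat k) (A : gcat G C).
Local Notation act := (act A).
Local Notation acth := (acth A).

(* The orbit category C/G.  A morphism x -> y is a family              *)
(*   f = (f_{beta,alpha}),  f_{beta,alpha} in C(alpha x, beta y),       *)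
(* here represented as  f b a : chom C (act a x) (act b y).             *)
Definition ofam (x y : ob C) := forall b a : G, chom C (act a x) (act b y).

Definition row_finite x y (f : ofam x y) :=
  forall b, exists s : seq G, forall a, f b a != 0 -> a \in s.
Definition col_finite x y (f : ofam x y) :=
  forall a, exists s : seq G, forall b, f b a != 0 -> b \in s.
Definition equivariant x y (f : ofam x y) :=
  forall c a b : G,
    f (c * b)%g (c * a)%g =
    castH (esym (act_mul A a c x)) (esym (act_mul A b c y)) (acth c (f b a)).

Definition ohom_pred x y (f : ofam x y) :=
  [/\ row_finite f, col_finite f & equivariant f].

Definition ohom (x y : ob C) := {f : ofam x y | ohom_pred f}.

(* h = g f in C/G :  h_{beta,alpha} = sum_gamma g_{beta,gamma} f_{gamma,alpha}
   (the sum taken over any duplicate-free finite list containing the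
   (finite) support of gamma |-> f_{gamma,alpha}) *)
Definition is_ocomp x y z (g : ofam y z) (f : ofam x y) (h : ofam x z) :=
  forall (a b : G) (s : seq G), uniq s -> (forall c, f c a != 0 -> c \in s) ->
    h b a = \sum_(c <- s) comp C (g b c) (f c a).

Definition is_oid x (e : ofam x x) :=
  (forall a, e a a = idm C (act a x)) /\ (forall a b, a != b -> e b a = 0).

Definition is_P x y (f : chom C x y) (e : ofam x y) :=
  (forall a, e a a = acth a f) /\ (forall a b, a != b -> e b a = 0).

(* e = phi_{mu,x}^{-1} : P(mu x) -> P x, whose entries are
   e_{beta,alpha} = delta_{beta, alpha mu} id_{alpha (mu x)}
   (this is the inverse of phi_{mu,x} = (delta_{alpha,beta mu} id_{alpha x})) *)
Definition is_phiinv (mu : G) x (e : ofam (act mu x) x) :=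
  (forall a, e (a * mu)%g a =
             castH (erefl _) (esym (act_mul A mu a x)) (idm C (act a (act mu x))))
  /\ (forall a b, b != (a * mu)%g -> e b a = 0).

(* Modules.  A module with underlying k-modules V x (x an object) is   *)
(* given by its action on morphisms (contravariant).                   *)

Unset Implicit Arguments.

Definition is_omod (V : ob C -> lmodType k)
    (N : forall x y, ohom x y -> V y -> V x) :=
  [/\ (forall x y (f : ohom x y) (c : k) (u v : V y),
          N x y f (c *: u + v) = c *: N x y f u + N x y f v),
      (forall x y (f1 f2 f3 : ohom x y) (c : k),
          (forall b a, sval f3 b a = c *: sval f1 b a + sval f2 b a) ->
          forall v, N x y f3 v = c *: N x y f1 v + N x y f2 v),
      (forall x (e : ohom x x), is_oid (sval e) -> forall v, N x x e v = v) &
      (forall x y z (f : ohom x y) (g : ohom y z) (h : ohom x z),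
          is_ocomp (sval g) (sval f) (sval h) ->
          forall v, N x z h v = N x y f (N y z g v))].

Definition is_cmod (V : ob C -> lmodType k)
    (M : forall x y, chom C x y -> V y -> V x) :=
  [/\ (forall x y (f : chom C x y) (c : k) (u v : V y),
          M x y f (c *: u + v) = c *: M x y f u + M x y f v),
      (forall x y (f1 f2 : chom C x y) (c : k) v,
          M x y (c *: f1 + f2) v = c *: M x y f1 v + M x y f2 v),
      (forall x v, M x x (idm C x) v = v) &
      (forall x y z (f : chom C x y) (g : chom C y z) v,
          M x z (comp C g f) v = M x y f (M y z g v))].

Definition is_gmod (V : ob C -> lmodType k)
    (M : forall x y, chom C x y -> V y -> V x)
    (psi : forall (mu : G) x, V x -> V (act mu x)) :=
  [/\ is_cmod V M,
      (forall mu x (c : k) (u v : V x),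
          psi mu x (c *: u + v) = c *: psi mu x u + psi mu x v),
      (forall mu x, bijective (psi mu x)) &
      (forall mu x y (f : chom C x y) (v : V y),
          M _ _ (acth mu f) (psi mu y v) = psi mu x (M x y f v)) /\
      ((forall x (v : V x), psi 1%g x v = castV (esym (act_one A x)) v) /\
      (forall (mu nu : G) x (v : V x),
          psi nu (act mu x) (psi mu x v) =
          castV (act_mul A mu nu x) (psi (nu * mu)%g x v)))].

Definition is_omor (V V' : ob C -> lmodType k)
    (N : forall x y, ohom x y -> V y -> V x)
    (N' : forall x y, ohom x y -> V' y -> V' x)
    (eta : forall x, V x -> V' x) :=
  (forall x (c : k) (u v : V x), eta x (c *: u + v) = c *: eta x u + eta x v)
  /\ (forall x y (f : ohom x y) (v : V y), eta x (N x y f v) = N' x y f (eta y v)).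

Definition is_gmor (V V' : ob C -> lmodType k)
    (M : forall x y, chom C x y -> V y -> V x)
    (psi : forall (mu : G) x, V x -> V (act mu x))
    (M' : forall x y, chom C x y -> V' y -> V' x)
    (psi' : forall (mu : G) x, V' x -> V' (act mu x))
    (eta : forall x, V x -> V' x) :=
  [/\ (forall x (c : k) (u v : V x), eta x (c *: u + v) = c *: eta x u + eta x v),
      (forall x y (f : chom C x y) (v : V y), eta x (M x y f v) = M' x y f (eta y v)) &
      (forall mu x (v : V x), eta (act mu x) (psi mu x v) = psi' mu x (eta x v))].

(* The pullup along (P, phi): (M, psi) is the pullup of N iff
   M = N o P (on objects V o P = V since P x = x) and
   psi_{mu,x} = N(phi_{mu,x}^{-1}) : N(P x) -> N(P mu x),
   i.e. the invariance adjuster induced from phi. *)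
Definition pullup (V : ob C -> lmodType k)
    (N : forall x y, ohom x y -> V y -> V x)
    (M : forall x y, chom C x y -> V y -> V x)
    (psi : forall (mu : G) x, V x -> V (act mu x)) :=
  (forall x y (f : chom C x y) (e : ohom x y), is_P f (sval e) ->
      forall v, M x y f v = N x y e v)
  /\ (forall mu x (e : ohom (act mu x) x), @is_phiinv mu x (sval e) ->
      forall v, psi mu x v = N _ _ e v).

End Orbit.

Arguments ohom {k G C} A x y.
Arguments is_omod {k G C A} V N.
Arguments is_cmod {k C} V M.
Arguments is_gmod {k G C A} V M psi.
Arguments is_omor {k G C A} V V' N N' eta.
Arguments is_gmor {k G C A} V V' M psi M' psi' eta.
Arguments pullup {k G C A} V N M psi.

From Pilot Require Import Defs.
From HB Require Import structures.
From mathcomp Require Import all_boot all_algebra.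
From Stdlib Require Import ProofIrrelevance FunctionalExtensionality ClassicalEpsilon.

Set Implicit Arguments.
Unset Strict Implicit.
Unset Printing Implicit Defensive.

Import GRing.Theory.
Local Open Scope ring_scope.

(** Equivariance determines a morphism [f : x -> y] of C/G by its column
    [(f_{beta,1})_beta], and, identifying [1 x] with [x],
    [f = sum_beta phi_beta^-1 o P(f_{beta,1})], a finite sum with a single
    nonzero term in each entry.  So a (C/G)-module [N] is determined by its
    pullup [M = N o P], [psi_beta = N(phi_beta^-1)] through
    [N(f) = sum_beta M(f_{beta,1}) o psi_beta]; this gives injectivity on
    objects, and shows that a transformation compatible with [M] and [psi] is
    already natural on C/G.  Conversely the same formula turns any G-invariant
    C-module [(M, psi)] into a (C/G)-module: naturality of [psi] and
    [psi_nu psi_mu = psi_{nu mu}] carry the column of [g f] to the composite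
    of the columns of [g] and [f]. *)

Section LinearFun.
Variables (k : comPzRingType) (U W : lmodType k) (phi : U -> W).
Hypothesis phi_lin : linear phi.

Lemma linear_fun0 : phi 0 = 0.
Proof.
have E : phi 0 = phi 0 + phi 0.
  by rewrite -{1}(addr0 (0 : U)) -{1}(scale1r (0 : U)) phi_lin scale1r.
by apply: (addrI (phi 0)); rewrite addr0 -E.
Qed.

Lemma linear_fun_sum (I : Type) (s : seq I) (F : I -> U) :
  phi (\sum_(i <- s) F i) = \sum_(i <- s) phi (F i).
Proof.
elim: s => [|i s IH]; first by rewrite !big_nil linear_fun0.
by rewrite !big_cons -IH -{1}[F i]scale1r phi_lin scale1r.
Qed.

End LinearFun.

Section BigSupport.
Variables (I : eqType) (W : zmodType) (F : I -> W).

Lemma big_uniq_delta i0 (s : seq I) :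
  uniq s -> (forall i, i != i0 -> F i = 0) -> (F i0 != 0 -> i0 \in s) ->
  \sum_(i <- s) F i = F i0.
Proof.
move=> s_uniq F0 s_i0; have [i0s | i0Ns] := boolP (i0 \in s).
  by rewrite (bigD1_seq i0) //= big1 ?addr0 // => i /F0.
have -> : F i0 = 0 by apply/eqP; apply: contraR i0Ns.
by rewrite big1_seq // => i /andP[_ si]; apply: F0; apply: contraNneq i0Ns => <-.
Qed.

Lemma eq_big_uniq_support (s t : seq I) :
  uniq s -> uniq t -> (forall i, F i != 0 -> i \in s) ->
  (forall i, F i != 0 -> i \in t) ->
  \sum_(i <- s) F i = \sum_(i <- t) F i.
Proof.
move=> s_uniq t_uniq s_supp t_supp.
have sum_nz r : \sum_(i <- r) F i = \sum_(i <- r | F i != 0) F i.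
  by rewrite [RHS]big_mkcond /=; apply: eq_bigr => i _; case: eqP.
rewrite (sum_nz s) (sum_nz t) -[LHS]big_filter -[RHS]big_filter.
apply/perm_big/uniq_perm; rewrite ?filter_uniq // => i.
by rewrite !mem_filter; case: eqP => //= /eqP Fi; rewrite s_supp ?t_supp.
Qed.

End BigSupport.

Section CastH.
Variables (k : comPzRingType) (C : kcat k).
Implicit Types (x y z : ob C).

Lemma castH_irr x x' y y' (p p' : x = x') (q q' : y = y') f :
  castH p q f = castH p' q' f.
Proof. by rewrite (proof_irrelevance _ p p') (proof_irrelevance _ q q'). Qed.

Lemma castH_id x y (p : x = x) (q : y = y) f : castH p q f = f.
Proof. by rewrite (castH_irr _ erefl _ erefl). Qed.

Lemma castH_trans x x' x'' y y' y'' (p : x = x') (p' : x' = x'')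
    (q : y = y') (q' : y' = y'') f :
  castH p' q' (castH p q f) = castH (etrans p p') (etrans q q') f.
Proof. by destruct p, q, p', q'. Qed.

Lemma castHV x x' y y' (p : x = x') (q : y = y') (f : chom C x y) g :
  castH p q f = g -> f = castH (esym p) (esym q) g.
Proof. by destruct p, q => <-. Qed.

Lemma castH0 x x' y y' (p : x = x') (q : y = y') : castH p q (0 : chom C x y) = 0.
Proof. by destruct p, q. Qed.

Lemma castH_lin x x' y y' (p : x = x') (q : y = y') c (f g : chom C x y) :
  castH p q (c *: f + g) = c *: castH p q f + castH p q g.
Proof. by destruct p, q. Qed.

Lemma castH_idm x x' y (p : x = x') (q : x = y) :
  castH p q (idm C x) = castH erefl (etrans (esym p) q) (idm C x').
Proof. by destruct p, q. Qed.

Lemma comp_castH x x' y y' z z' (p : x = x') (q q' : y = y') (r : z = z')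
    (g : chom C y z) (f : chom C x y) :
  Defs.comp C (castH q r g) (castH p q' f) = castH p r (Defs.comp C g f).
Proof. by rewrite (proof_irrelevance _ q' q); destruct p, q, r. Qed.

Lemma comp_castH_idl x y y' (q : y = y') (f : chom C x y) :
  Defs.comp C (castH erefl q (idm C y)) f = castH erefl q f.
Proof. by destruct q; rewrite comp1m. Qed.

Lemma comp_castH_idr x y z (q : x = y) (g : chom C y z) :
  Defs.comp C g (castH erefl q (idm C x)) = castH (esym q) erefl g.
Proof. by destruct q; rewrite compm1. Qed.

Lemma compm0 x y z (g : chom C y z) : Defs.comp C g (0 : chom C x y) = 0.
Proof. exact: (linear_fun0 (fun c => compDr c g)). Qed.

Lemma comp0m x y z (f : chom C x y) : Defs.comp C (0 : chom C y z) f = 0.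
Proof. exact: (linear_fun0 (fun c g1 g2 => compDl c g1 g2 f)). Qed.

End CastH.

Section CastV.
Variables (T : Type) (k : comPzRingType) (V : T -> lmodType k).

Lemma castV_id a (e : a = a) (v : V a) : castV e v = v.
Proof. by rewrite (proof_irrelevance _ e erefl). Qed.

Lemma castV_trans a b c (e : a = b) (e' : b = c) (v : V a) :
  castV e' (castV e v) = castV (etrans e e') v.
Proof. by destruct e, e'. Qed.

Lemma castV_lin a b (e : a = b) : linear (@castV T k V a b e).
Proof. by destruct e. Qed.

Lemma castV_fun (V' : T -> lmodType k) (eta : forall t, V t -> V' t) a b
    (e : a = b) (v : V a) :
  eta b (castV e v) = castV e (eta a v).
Proof. by destruct e. Qed.

End CastV.

Section OrbitCategory.
Variables (k : comPzRingType) (G : groupType) (C : kcat k) (A : gcat G C).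
Local Notation act := (act A).
Local Notation acth := (acth A).
Local Notation cmp := (Defs.comp C).
Implicit Types (x y z : ob C).

Lemma acth0 a x y : acth a (0 : chom C x y) = 0.
Proof. exact: (linear_fun0 (acth_lin A a (x := x) (y := y))). Qed.

Lemma acth_castH a x x' y y' (p : x = x') (q : y = y') f :
  acth a (castH p q f) = castH (congr1 (act a) p) (congr1 (act a) q) (acth a f).
Proof. by destruct p, q. Qed.

Lemma acth_idx a a' x y (e : a = a') (p : act a x = act a' x)
    (q : act a y = act a' y) (f : chom C x y) :
  acth a' f = castH p q (acth a f).
Proof. by destruct e; rewrite castH_id. Qed.

Lemma ofam_idx x y (f : ofam A x y) a a' b b' (ea : a = a') (eb : b = b')
    (p : act a x = act a' x) (q : act b y = act b' y) :
  f b' a' = castH p q (f b a).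
Proof. by destruct ea, eb; rewrite castH_id. Qed.

Definition monomial x y (f : ofam A x y) (s : G) :=
  forall b a, b != (a * s)%g -> f b a = 0.

Definition Pfam x y (f : chom C x y) : ofam A x y := fun b a =>
  match a =P b with
  | ReflectT e => castH erefl (congr1 (fun t => act t y) e) (acth a f)
  | ReflectF _ => 0
  end.

Lemma PfamE x y (f : chom C x y) a b (e : a = b) :
  Pfam f b a = castH erefl (congr1 (fun t => act t y) e) (acth a f).
Proof. by rewrite /Pfam; case: eqP => // e'; apply: castH_irr. Qed.

Lemma Pfam_off x y (f : chom C x y) a b : a != b -> Pfam f b a = 0.
Proof. by rewrite /Pfam; case: eqP. Qed.

Lemma Pfam_diag x y (f : chom C x y) a : Pfam f a a = acth a f.
Proof. by rewrite (PfamE _ (erefl a)). Qed.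

Lemma Pfam0 x y b a : Pfam (0 : chom C x y) b a = 0.
Proof. by rewrite /Pfam; case: eqP => // e; rewrite acth0 castH0. Qed.

Lemma Pfam_monomial x y (f : chom C x y) : monomial (Pfam f) 1.
Proof. by move=> b a; rewrite mulg1 eq_sym; apply: Pfam_off. Qed.

Lemma Pfam_ohom x y (f : chom C x y) : ohom_pred (Pfam f).
Proof.
split.
- move=> b; exists [:: b] => a.
  by case: (eqVneq a b) => [->|/Pfam_off ->]; rewrite ?eqxx ?inE.
- move=> a; exists [:: a] => b.
  by case: (eqVneq a b) => [->|/Pfam_off ->]; rewrite ?eqxx ?inE.
move=> c a b; case: (eqVneq a b) => [<-|ab].
  by rewrite !Pfam_diag acth_mul; apply: castH_irr.
by rewrite !Pfam_off ?acth0 ?castH0 //; apply: contra ab => /eqP /mulgI ->.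
Qed.

Definition oP x y (f : chom C x y) : ohom A x y := exist _ (Pfam f) (Pfam_ohom f).

Lemma Pfam_is_P x y (f : chom C x y) : is_P f (Pfam f).
Proof. by split=> [a|a b ab]; rewrite ?Pfam_diag ?Pfam_off. Qed.

Lemma Pfam_oid x : is_oid (Pfam (idm C x)).
Proof. by split=> [a|a b ab]; rewrite ?Pfam_diag ?acth_id ?Pfam_off. Qed.

Lemma is_P_Pfam x y (f : chom C x y) (e : ofam A x y) :
  is_P f e -> forall b a, e b a = Pfam f b a.
Proof.
case=> e_diag e_off b a; case: (eqVneq a b) => [<-|ab].
  by rewrite e_diag Pfam_diag.
by rewrite e_off // Pfam_off.
Qed.

Definition phiinv (mu : G) x : ofam A (act mu x) x := fun b a =>
  match (a * mu)%g =P b with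
  | ReflectT e =>
      castH erefl (etrans (esym (act_mul A mu a x)) (congr1 (fun t => act t x) e))
        (idm C (act a (act mu x)))
  | ReflectF _ => 0
  end.

Lemma phiinvE mu x a b (e : (a * mu)%g = b) :
  phiinv mu x b a =
  castH erefl (etrans (esym (act_mul A mu a x)) (congr1 (fun t => act t x) e))
    (idm C (act a (act mu x))).
Proof. by rewrite /phiinv; case: eqP => // e'; apply: castH_irr. Qed.

Lemma phiinv_monomial mu x : monomial (phiinv mu x) mu.
Proof. by move=> b a ne; rewrite /phiinv; case: eqP => // e; rewrite e eqxx in ne. Qed.

Lemma phiinv_ohom mu x : ohom_pred (phiinv mu x).
Proof.
split.
- move=> b; exists [:: (b * mu^-1)%g] => a; apply: contraR => a_b.
  by rewrite phiinv_monomial //; apply: contra a_b => /eqP ->; rewrite mulgK inE.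
- move=> a; exists [:: (a * mu)%g] => b; apply: contraR => b_a.
  by rewrite phiinv_monomial //; apply: contra b_a => /eqP ->; rewrite inE.
move=> c a b; case: (eqVneq b (a * mu)%g) => [->|ne].
  rewrite (phiinvE _ (erefl (a * mu)%g)) (phiinvE _ (esym (mulgA c a mu))).
  by rewrite acth_castH acth_id castH_trans [RHS]castH_idm; apply: castH_irr.
rewrite !phiinv_monomial ?acth0 ?castH0 //.
by rewrite -mulgA; apply: contra ne => /eqP /mulgI ->.
Qed.

Definition ophiinv mu x : ohom A (act mu x) x :=
  exist _ (phiinv mu x) (phiinv_ohom mu x).

Lemma phiinv_is_phiinv mu x : is_phiinv (phiinv mu x).
Proof.
split=> [a|a b ne]; last exact: phiinv_monomial.
by rewrite (phiinvE _ (erefl (a * mu)%g)); apply: castH_irr.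
Qed.

Lemma is_phiinv_phiinv mu x (e : ofam A (act mu x) x) :
  is_phiinv e -> forall b a, e b a = phiinv mu x b a.
Proof.
case=> e_diag e_off b a; case: (eqVneq b (a * mu)%g) => [->|ne].
  by rewrite e_diag (phiinvE _ (erefl (a * mu)%g)); apply: castH_irr.
by rewrite e_off // phiinv_monomial.
Qed.

Definition mcomp x y z (g : ofam A y z) (f : ofam A x y) (s : G) : ofam A x z :=
  fun b a => cmp (g b (a * s)%g) (f (a * s)%g a).

Lemma mcomp_is_ocomp x y z (g : ofam A y z) (f : ofam A x y) s :
  monomial f s -> is_ocomp g f (mcomp g f s).
Proof.
move=> f_mon a b l l_uniq l_supp; rewrite /mcomp; symmetry.
apply: (big_uniq_delta (F := fun c => cmp (g b c) (f c a))) => //.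
  by move=> c /(f_mon c a) ->; rewrite compm0.
by move=> nz; apply: l_supp; apply: contra nz => /eqP ->; rewrite compm0.
Qed.

Lemma is_ocomp_eq x y z (g : ofam A y z) (f : ofam A x y) h h' :
  is_ocomp g f h -> (forall b a, h' b a = h b a) -> is_ocomp g f h'.
Proof. by move=> gfh E a b l l_uniq l_supp; rewrite E; apply: gfh. Qed.

Lemma mcomp_ohom x y z (g : ofam A y z) (f : ofam A x y) s :
  ohom_pred g -> ohom_pred f -> ohom_pred (mcomp g f s).
Proof.
case=> g_row g_col g_eq [_ f_col f_eq]; split.
- move=> b; have [l l_supp] := g_row b; exists [seq (c * s^-1)%g | c <- l] => a nz.
  have : g b (a * s)%g != 0 by apply: contra nz; rewrite /mcomp => /eqP ->; rewrite comp0m.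
  by move/l_supp/(map_f (fun c => (c * s^-1)%g)); rewrite mulgK.
- move=> a; have [l l_supp] := g_col (a * s)%g; exists l => b nz; apply: l_supp.
  by apply: contra nz; rewrite /mcomp => /eqP ->; rewrite comp0m.
move=> c a b; rewrite /mcomp -mulgA g_eq f_eq comp_castH acth_comp.
exact: castH_irr.
Qed.

Definition omcomp x y z (g : ohom A y z) (f : ohom A x y) s : ohom A x z :=
  exist _ (mcomp (sval g) (sval f) s) (mcomp_ohom s (svalP g) (svalP f)).

Definition olin_fam x y (c : k) (f g : ofam A x y) : ofam A x y :=
  fun b a => c *: f b a + g b a.

Lemma olin_ohom x y c (f g : ofam A x y) :
  ohom_pred f -> ohom_pred g -> ohom_pred (olin_fam c f g).
Proof.
case=> f_row f_col f_eq [g_row g_col g_eq]; split.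
- move=> b; have [l1 H1] := f_row b; have [l2 H2] := g_row b.
  exists (l1 ++ l2) => a nz; rewrite mem_cat.
  case: (eqVneq (f b a) 0) => [f0|/H1 -> //].
  by rewrite /olin_fam f0 scaler0 add0r in nz; rewrite H2 ?orbT.
- move=> a; have [l1 H1] := f_col a; have [l2 H2] := g_col a.
  exists (l1 ++ l2) => b nz; rewrite mem_cat.
  case: (eqVneq (f b a) 0) => [f0|/H1 -> //].
  by rewrite /olin_fam f0 scaler0 add0r in nz; rewrite H2 ?orbT.
by move=> d a b; rewrite /olin_fam f_eq g_eq acth_lin castH_lin.
Qed.

Definition olin x y c (f g : ohom A x y) : ohom A x y :=
  exist _ (olin_fam c (sval f) (sval g)) (olin_ohom c (svalP f) (svalP g)).

Lemma ozero_ohom x y : ohom_pred (fun b a : G => 0 : chom C (act a x) (act b y)).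
Proof.
split; [by move=> b; exists [::] => a; rewrite eqxx..|].
by move=> c a b; rewrite acth0 castH0.
Qed.

Definition ozero x y : ohom A x y := exist _ _ (ozero_ohom x y).

Definition osum x y (I : Type) (F : I -> ohom A x y) (s : seq I) : ohom A x y :=
  foldr (fun i acc => olin 1 (F i) acc) (ozero x y) s.

Lemma osumE x y (I : Type) (F : I -> ohom A x y) (s : seq I) b a :
  sval (osum F s) b a = \sum_(i <- s) sval (F i) b a.
Proof.
elim: s => [|i s IH]; first by rewrite big_nil.
by rewrite big_cons /= /olin_fam scale1r IH.
Qed.

Lemma ohom_col1E x y (f : ohom A x y) b a :
  sval f b a =
  castH (etrans (esym (act_mul A 1 a x)) (congr1 (fun t => act t x) (mulg1 a)))
        (etrans (esym (act_mul A (a^-1 * b) a y))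
                (congr1 (fun t => act t y) (mulVKg a b)))
        (acth a (sval f (a^-1 * b)%g 1%g)).
Proof.
case: (svalP f) => _ _ f_eq.
rewrite (ofam_idx (sval f) (mulg1 a) (mulVKg a b)
           (congr1 (fun t => act t x) (mulg1 a)) (congr1 (fun t => act t y) (mulVKg a b))).
by rewrite f_eq castH_trans; apply: castH_irr.
Qed.

Lemma ohom_col1_neq0 x y (f : ohom A x y) b a :
  sval f b a != 0 -> sval f (a^-1 * b)%g 1%g != 0.
Proof. by rewrite ohom_col1E; apply: contra => /eqP ->; rewrite acth0 castH0. Qed.

Lemma ohom_col1_finite x y (f : ohom A x y) :
  exists s : seq G, forall b, sval f b 1%g != 0 -> b \in s.
Proof. by case: (svalP f) => _ f_col _; apply: f_col. Qed.

Definition supp x y (f : ohom A x y) : seq G :=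
  undup (proj1_sig (constructive_indefinite_description _ (ohom_col1_finite f))).

Lemma supp_uniq x y (f : ohom A x y) : uniq (supp f).
Proof. exact: undup_uniq. Qed.

Lemma supp_mem x y (f : ohom A x y) b : sval f b 1%g != 0 -> b \in supp f.
Proof.
rewrite mem_undup; move: b.
exact: (proj2_sig (constructive_indefinite_description _ (ohom_col1_finite f))).
Qed.

Lemma ohom_decomp x y (f : ohom A x y) (l : seq G) :
  uniq l -> (forall b, sval f b 1%g != 0 -> b \in l) ->
  forall b a, sval f b a = castH (congr1 (act a) (act_one A x)) erefl
    (sval (osum (fun be => omcomp (ophiinv be y) (oP (sval f be 1%g)) 1) l) b a).
Proof.
move=> l_uniq l_supp b a; rewrite osumE /=.
rewrite (big_uniq_delta (i0 := (a^-1 * b)%g)) //.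
- rewrite /mcomp (PfamE _ (esym (mulg1 a))).
  rewrite (phiinvE _ (etrans (congr1 (fun t => (t * (a^-1 * b))%g) (mulg1 a)) (mulVKg a b))).
  by rewrite comp_castH_idl castH_trans ohom_col1E castH_trans; apply: castH_irr.
- move=> c ne; rewrite /mcomp phiinv_monomial ?comp0m // mulg1.
  by apply: contra ne => /eqP ->; rewrite mulKg.
- by move=> nz; apply: l_supp; apply: contra nz => /eqP ->; rewrite /mcomp Pfam0 compm0.
Qed.

Section AdjusterBij.
Variables (V : ob C -> lmodType k) (psi : forall (mu : G) x, V x -> V (act mu x)).
Arguments psi mu {x}.

Lemma psi_castV mu x x' (p : x' = x) (v : V x') :
  psi mu (castV p v) = castV (congr1 (act mu) p) (psi mu v).
Proof. by destruct p. Qed.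

Lemma psi_idx a b x (e : a = b) (p : act a x = act b x) (v : V x) :
  castV p (psi a v) = psi b v.
Proof. by destruct e; rewrite castV_id. Qed.

Hypothesis psi1 : forall x (v : V x), psi 1%g v = castV (esym (act_one A x)) v.
Hypothesis psiM : forall mu nu x (v : V x),
  psi nu (psi mu v) = castV (act_mul A mu nu x) (psi (nu * mu)%g v).

Lemma adjuster_bij mu x : bijective (@psi mu x).
Proof.
pose E := etrans (esym (act_mul A mu mu^-1 x))
            (etrans (congr1 (fun t => act t x) (mulVg mu)) (act_one A x)).
exists (fun w => castV E (psi mu^-1 w)).
- move=> v; rewrite psiM castV_trans.
  rewrite -(psi_idx (esym (mulVg mu)) (congr1 (fun t => act t x) (esym (mulVg mu)))).
  by rewrite psi1 !castV_trans castV_id.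
- move=> w; rewrite psi_castV psiM castV_trans.
  rewrite -(psi_idx (esym (mulgV mu)) (congr1 (fun t => act t (act mu x)) (esym (mulgV mu)))).
  by rewrite psi1 !castV_trans castV_id.
Qed.

End AdjusterBij.

Section OrbitModule.
Variables (V : ob C -> lmodType k) (N : forall x y, ohom A x y -> V y -> V x).
Hypothesis N_mod : is_omod V N.
Arguments N {x y}.

Lemma omod_eq x y (f f' : ohom A x y) v :
  (forall b a, sval f b a = sval f' b a) -> N f v = N f' v.
Proof.
case: N_mod => _ N_lin _ _ E.
by rewrite (N_lin x y f' f' f 0) ?scale0r ?add0r // => b a; rewrite E scale0r add0r.
Qed.

Lemma omod_cast x x' y (p : x' = x) (f : ohom A x y) (f' : ohom A x' y) v :
  (forall b a, sval f b a = castH (congr1 (act a) p) erefl (sval f' b a)) ->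
  N f v = castV p (N f' v).
Proof. by destruct p => E; apply: omod_eq => b a; rewrite E castH_id. Qed.

Lemma omod_ozero x y v : N (ozero x y) v = 0.
Proof.
case: N_mod => _ N_lin _ _.
have E : N (ozero x y) v = 1 *: N (ozero x y) v + N (ozero x y) v.
  by apply: N_lin => b a; rewrite /= scale1r addr0.
by apply: (addrI (N (ozero x y) v)); rewrite scale1r in E; rewrite addr0 -E.
Qed.

Lemma omod_osum x y (I : Type) (F : I -> ohom A x y) (s : seq I) v :
  N (osum F s) v = \sum_(i <- s) N (F i) v.
Proof.
case: N_mod => _ N_lin _ _.
elim: s => [|i s IH]; first by rewrite big_nil omod_ozero.
by rewrite big_cons -IH (N_lin x y (F i) (osum F s) (osum F (i :: s)) 1) ?scale1r.
Qed.

Lemma omod_decomp x y (f : ohom A x y) (l : seq G) :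
  uniq l -> (forall b, sval f b 1%g != 0 -> b \in l) -> forall v,
  N f v = castV (act_one A x)
    (\sum_(be <- l) N (oP (sval f be 1%g)) (N (ophiinv be y) v)).
Proof.
move=> l_uniq l_supp v; case: (N_mod) => _ _ _ N_comp.
under eq_bigr => be _ do
  rewrite -(N_comp _ _ _ (oP (sval f be 1%g)) (ophiinv be y)
              (omcomp (ophiinv be y) (oP (sval f be 1%g)) 1)
              (mcomp_is_ocomp _ (Pfam_monomial _))).
by rewrite -omod_osum; apply: omod_cast; apply: ohom_decomp.
Qed.

Lemma pullup_decomp (M : forall x y, chom C x y -> V y -> V x)
    (psi : forall (mu : G) x, V x -> V (act mu x)) :
  pullup V (@N) M psi -> forall x y (f : ohom A x y) v,
  N f v = castV (act_one A x)
    (\sum_(be <- supp f) M _ _ (sval f be 1%g) (psi be y v)).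
Proof.
move=> [MP psiP] x y f v; rewrite (omod_decomp (supp_uniq f) (@supp_mem _ _ f)).
congr (castV _ _); apply: eq_bigr => be _.
by rewrite (psiP _ _ (ophiinv be y) (phiinv_is_phiinv be y)) (MP _ _ _ (oP _) (Pfam_is_P _)).
Qed.

Definition pullM x y (f : chom C x y) : V y -> V x := N (oP f).
Definition pullpsi mu x : V x -> V (act mu x) := N (ophiinv mu x).

Lemma pullup_pull : pullup V (@N) pullM pullpsi.
Proof.
split=> [x y f e fe | mu x e e_phi] v; apply: omod_eq => b a /=; symmetry.
  exact: is_P_Pfam.
exact: is_phiinv_phiinv.
Qed.

Lemma pullM_cmod : is_cmod V pullM.
Proof.
case: N_mod => N_lin N_linf N_id N_comp; split.
- by move=> x y f; apply: N_lin.
- move=> x y f1 f2 c v; apply: N_linf => b a /=; rewrite /Pfam.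
  by case: eqP => e; rewrite ?acth_lin ?castH_lin // scaler0 addr0.
- by move=> x v; apply: N_id; apply: Pfam_oid.
move=> x y z f g v; apply: N_comp.
apply: (is_ocomp_eq (mcomp_is_ocomp _ (Pfam_monomial f))) => b a /=.
rewrite /mcomp; case: (eqVneq a b) => [<-|ab]; last first.
  by rewrite Pfam_off // (@Pfam_off y z g) ?comp0m // mulg1.
rewrite Pfam_diag (PfamE _ (mulg1 a)) (PfamE _ (esym (mulg1 a))) acth_comp.
rewrite (acth_idx (esym (mulg1 a)) (congr1 (fun t => act t y) (esym (mulg1 a)))
           (congr1 (fun t => act t z) (esym (mulg1 a))) g).
by rewrite castH_trans comp_castH castH_id.
Qed.

Lemma pullpsi1 x (v : V x) : pullpsi 1%g v = castV (esym (act_one A x)) v.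
Proof.
case: N_mod => _ _ N_id _.
rewrite /pullpsi (omod_cast (p := esym (act_one A x)) (f' := oP (idm C x))).
  by rewrite N_id //; apply: Pfam_oid.
move=> b a /=; case: (eqVneq a b) => [<-|ab].
  rewrite (phiinvE _ (mulg1 a)) Pfam_diag acth_id [RHS]castH_idm; apply: castH_irr.
by rewrite Pfam_off // castH0 phiinv_monomial // mulg1 eq_sym.
Qed.

Lemma pullpsiM mu nu x (v : V x) :
  pullpsi nu (pullpsi mu v) = castV (act_mul A mu nu x) (pullpsi (nu * mu)%g v).
Proof.
case: N_mod => _ _ _ N_comp.
rewrite /pullpsi -(N_comp _ _ _ (ophiinv nu (act mu x)) (ophiinv mu x)
   (omcomp (ophiinv mu x) (ophiinv nu (act mu x)) nu)
   (mcomp_is_ocomp _ (@phiinv_monomial nu (act mu x)))).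
apply: omod_cast => b a /=; rewrite /mcomp.
case: (eqVneq b (a * (nu * mu))%g) => [->|ne]; last first.
  rewrite (@phiinv_monomial (nu * mu)%g x b a ne) castH0.
  by rewrite phiinv_monomial ?comp0m // -mulgA.
rewrite (phiinvE _ (esym (mulgA a nu mu))) (phiinvE _ (erefl (a * nu)%g)) comp_castH_idl.
rewrite !castH_trans (phiinvE _ (erefl (a * (nu * mu))%g)) [RHS]castH_idm.
exact: castH_irr.
Qed.

Lemma pullpsi_nat mu x y (f : chom C x y) v :
  pullM (acth mu f) (pullpsi mu v) = pullpsi mu (pullM f v).
Proof.
case: N_mod => _ _ _ N_comp; rewrite /pullM /pullpsi.
rewrite -(N_comp _ _ _ (oP (acth mu f)) (ophiinv mu y)
   (omcomp (ophiinv mu y) (oP (acth mu f)) 1) (mcomp_is_ocomp _ (Pfam_monomial _))).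
rewrite -(N_comp _ _ _ (ophiinv mu x) (oP f) (omcomp (oP f) (ophiinv mu x) mu)
   (mcomp_is_ocomp _ (@phiinv_monomial mu x))).
apply: omod_eq => b a /=; rewrite /mcomp.
case: (eqVneq b (a * mu)%g) => [->|ne]; last first.
  rewrite (@phiinv_monomial mu y b (a * 1)%g) ?mulg1 // comp0m.
  by rewrite (@Pfam_off x y f (a * mu)%g b) ?comp0m // eq_sym.
rewrite (phiinvE _ (congr1 (fun t => (t * mu)%g) (mulg1 a))) (PfamE _ (esym (mulg1 a))).
rewrite comp_castH_idl castH_trans Pfam_diag (phiinvE _ (erefl (a * mu)%g)) comp_castH_idr.
by rewrite acth_mul castH_trans; apply: castH_irr.
Qed.

Lemma gmod_pull : is_gmod V pullM pullpsi.
Proof.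
split; [exact: pullM_cmod | by case: N_mod => N_lin _ _ _ mu x; apply: N_lin | |].
  by apply: adjuster_bij; [apply: pullpsi1 | apply: pullpsiM].
by split; [apply: pullpsi_nat | split; [apply: pullpsi1 | apply: pullpsiM]].
Qed.

End OrbitModule.

Section InvariantModule.
Variables (V : ob C -> lmodType k) (M : forall x y, chom C x y -> V y -> V x)
  (psi : forall (mu : G) x, V x -> V (act mu x)).
Arguments M {x y}.
Arguments psi mu {x}.

Lemma M_castH x x' y y' (p : x = x') (q q' : y = y') f v :
  M (castH p q f) (castV q' v) = castV p (M f v).
Proof. by rewrite (proof_irrelevance _ q' q); destruct p, q. Qed.

Lemma M_idx y w (F : forall t : G, chom C (act t y) w) a a' (e : a' = a)
    (p : act a' y = act a y) u :
  castV p (M (F a') u) = M (F a) u.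
Proof. by destruct e; rewrite castV_id. Qed.

Hypothesis M_gmod : is_gmod V (@M) (@psi).

Lemma M_linv x y (f : chom C x y) : linear (M f).
Proof. by case: M_gmod => [[M_lin _ _ _] _ _ _]; apply: M_lin. Qed.

Lemma M_linf x y (v : V y) : linear (fun f : chom C x y => M f v).
Proof. by case: M_gmod => [[_ M_lin _ _] _ _ _] c f1 f2; apply: M_lin. Qed.

Lemma M_id x v : M (idm C x) v = v.
Proof. by case: M_gmod => [[_ _ M_id _] _ _ _]; apply: M_id. Qed.

Lemma M_comp x y z (f : chom C x y) (g : chom C y z) v : M (cmp g f) v = M f (M g v).
Proof. by case: M_gmod => [[_ _ _ M_comp] _ _ _]; apply: M_comp. Qed.

Lemma psi_lin mu x : linear (@psi mu x).
Proof. by case: M_gmod => _ psi_lin _ _; apply: psi_lin. Qed.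

Lemma psi_nat mu x y (f : chom C x y) v : M (acth mu f) (psi mu v) = psi mu (M f v).
Proof. by case: M_gmod => _ _ _ [psi_nat _]; apply: psi_nat. Qed.

Lemma psi1 x (v : V x) : psi 1%g v = castV (esym (act_one A x)) v.
Proof. by case: M_gmod => _ _ _ [_ [psi1 _]]; apply: psi1. Qed.

Lemma psiM mu nu x (v : V x) :
  psi nu (psi mu v) = castV (act_mul A mu nu x) (psi (nu * mu)%g v).
Proof. by case: M_gmod => _ _ _ [_ [_ psiM]]; apply: psiM. Qed.

Lemma M0f x y (v : V y) : M (0 : chom C x y) v = 0.
Proof. exact: (linear_fun0 (M_linf v)). Qed.

Lemma M_idm_cast u u' (q : u = u') (w : V u') :
  M (castH erefl q (idm C u)) w = castV (esym q) w.
Proof. by destruct q; rewrite M_id. Qed.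

Definition descent x y (f : ohom A x y) (v : V y) : V x :=
  castV (act_one A x) (\sum_(be <- supp f) M (sval f be 1%g) (psi be v)).

Lemma descentE x y (f : ohom A x y) l :
  uniq l -> (forall b, sval f b 1%g != 0 -> b \in l) -> forall v,
  descent f v = castV (act_one A x) (\sum_(be <- l) M (sval f be 1%g) (psi be v)).
Proof.
move=> l_uniq l_supp v; congr (castV _ _).
apply: eq_big_uniq_support => // [|c nz|c nz]; first exact: supp_uniq.
  by apply: supp_mem; apply: contra nz => /eqP ->; rewrite M0f.
by apply: l_supp; apply: contra nz => /eqP ->; rewrite M0f.
Qed.

Lemma psi_descent_term y z (g : ohom A y z) ga de (v : V z) :
  castV (congr1 (act ga) (act_one A y)) (psi ga (M (sval g de 1%g) (psi de v))) =
  M (sval g (ga * de)%g ga) (psi (ga * de)%g v).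
Proof.
have g_eq : equivariant (sval g) by case: (svalP g).
rewrite -psi_nat psiM (castHV (esym (g_eq ga 1%g de))) M_castH castV_trans.
exact: (@M_idx _ _ (fun t => sval g (ga * de)%g t) _ _ (mulg1 ga)).
Qed.

Lemma descent_comp x y z (f : ohom A x y) (g : ohom A y z) (h : ohom A x z) v :
  is_ocomp (sval g) (sval f) (sval h) -> descent h v = descent f (descent g v).
Proof.
move=> gfh.
pose T := undup (supp h ++ [seq (ga * de)%g | ga <- supp f, de <- supp g]).
rewrite (@descentE x z h T (undup_uniq _)); last first.
  by move=> b /supp_mem hb; rewrite mem_undup mem_cat hb.
rewrite {1}/descent; congr (castV _ _).
under eq_bigr => de _ do
  rewrite (gfh 1%g de (supp f) (supp_uniq f) (@supp_mem _ _ f))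
          (linear_fun_sum (M_linf _)).
under eq_bigr => de _ do under eq_bigr => ga _ do rewrite M_comp.
rewrite exchange_big /=; apply: eq_big_seq => ga f_ga.
rewrite -linear_fun_sum; last exact: M_linv.
congr (M _ _); rewrite /descent psi_castV.
rewrite (linear_fun_sum (@psi_lin ga _)) (linear_fun_sum (castV_lin _)).
under [RHS]eq_bigr => de _ do rewrite psi_descent_term.
rewrite -(big_map (fun de => (ga * de)%g) xpredT
            (fun de' => M (sval g de' ga) (psi de' v))).
have g_supp de' : M (sval g de' ga) (psi de' v) != 0 -> (ga^-1 * de')%g \in supp g.
  move=> nz; apply/supp_mem/ohom_col1_neq0.
  by apply: contra nz => /eqP ->; rewrite M0f.
apply: eq_big_uniq_support => [||de' /g_supp g_de'|de' /g_supp g_de'].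
- exact: undup_uniq.
- by rewrite map_inj_uniq ?supp_uniq //; apply: mulgI.
- rewrite -(mulVKg ga de') mem_undup mem_cat.
  by rewrite (allpairs_f (fun a b => (a * b)%g) f_ga g_de') orbT.
- by rewrite -(mulVKg ga de'); apply: map_f.
Qed.

Lemma omod_descent : is_omod V descent.
Proof.
split.
- move=> x y f c u w; rewrite /descent -castV_lin; congr (castV _ _).
  rewrite scaler_sumr -big_split /=; apply: eq_bigr => be _.
  by rewrite psi_lin M_linv.
- move=> x y f1 f2 f3 c f3E v.
  pose T := undup (supp f1 ++ supp f2 ++ supp f3).
  have T_supp (f : ohom A x y) :
      {subset supp f <= T} -> forall b, sval f b 1%g != 0 -> b \in T.
    by move=> fT b /supp_mem /fT.
  rewrite (@descentE _ _ f1 T (undup_uniq _)); last first.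
    by apply: T_supp => b; rewrite /T mem_undup !mem_cat => ->.
  rewrite (@descentE _ _ f2 T (undup_uniq _)); last first.
    by apply: T_supp => b; rewrite /T mem_undup !mem_cat => ->; rewrite orbT.
  rewrite (@descentE _ _ f3 T (undup_uniq _)); last first.
    by apply: T_supp => b; rewrite /T mem_undup !mem_cat => ->; rewrite !orbT.
  rewrite -castV_lin; congr (castV _ _).
  rewrite scaler_sumr -big_split /=; apply: eq_bigr => be _.
  by rewrite f3E M_linf.
- move=> x e [e_diag e_off] v.
  rewrite (@descentE x x e [:: 1%g]) // ?big_seq1 ?e_diag ?psi1 ?M_id ?castV_trans ?castV_id //.
  by move=> b; apply: contraR; rewrite inE eq_sym => /e_off ->.
- by move=> x y z f g h gfh v; apply: descent_comp.
Qed.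

Lemma pullup_descent : pullup V descent (@M) (@psi).
Proof.
split.
- move=> x y f e [e_diag e_off] v.
  rewrite (@descentE x y e [:: 1%g]) // ?big_seq1 ?e_diag ?psi1.
    by rewrite acth_one M_castH castV_trans castV_id.
  by move=> b; apply: contraR; rewrite inE eq_sym => /e_off ->.
- move=> mu x e [e_diag e_off] v.
  rewrite (@descentE _ x e [:: mu]) // ?big_seq1.
    rewrite (ofam_idx (sval e) (erefl 1%g) (mul1g mu) erefl
               (congr1 (fun t => act t x) (mul1g mu))).
    by rewrite e_diag castH_trans M_idm_cast castV_trans castV_id.
  by move=> b; apply: contraR; rewrite inE -{1}(mul1g mu) => /e_off ->.
Qed.

End InvariantModule.

Lemma pullup_unique (V : ob C -> lmodType k) (N : forall x y, ohom A x y -> V y -> V x)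
    M psi M' psi' :
  pullup V N M psi -> pullup V N M' psi' -> M = M' /\ psi = psi'.
Proof.
move=> [MP psiP] [MP' psiP']; split.
  apply: functional_extensionality_dep => x; apply: functional_extensionality_dep => y.
  apply: functional_extensionality_dep => f; apply: functional_extensionality => v.
  by rewrite (MP _ _ _ (oP f) (Pfam_is_P f)) (MP' _ _ _ (oP f) (Pfam_is_P f)).
apply: functional_extensionality_dep => mu; apply: functional_extensionality_dep => x.
apply: functional_extensionality => v.
by rewrite (psiP _ _ (ophiinv mu x) (phiinv_is_phiinv mu x))
           (psiP' _ _ (ophiinv mu x) (phiinv_is_phiinv mu x)).
Qed.

Lemma pullup_inj (V : ob C -> lmodType k) (N N' : forall x y, ohom A x y -> V y -> V x) M psi :
  is_omod V N -> is_omod V N' -> pullup V N M psi -> pullup V N' M psi -> N = N'.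
Proof.
move=> N_mod N'_mod NP N'P.
apply: functional_extensionality_dep => x; apply: functional_extensionality_dep => y.
apply: functional_extensionality_dep => f; apply: functional_extensionality => v.
by rewrite (pullup_decomp N_mod NP) (pullup_decomp N'_mod N'P).
Qed.

Lemma pullup_mor (V V' : ob C -> lmodType k) (N : forall x y, ohom A x y -> V y -> V x)
    (N' : forall x y, ohom A x y -> V' y -> V' x) M psi M' psi'
    (eta : forall x, V x -> V' x) :
  is_omod V N -> is_omod V' N' -> pullup V N M psi -> pullup V' N' M' psi' ->
  is_omor V V' N N' eta <-> is_gmor V V' M psi M' psi' eta.
Proof.
move=> N_mod N'_mod NP N'P; case: (NP) (N'P) => MP psiP [M'P psi'P]; split.
- case=> eta_lin eta_nat; split=> // [x y f | mu x] v.
    by rewrite (MP _ _ _ (oP f) (Pfam_is_P f)) (M'P _ _ _ (oP f) (Pfam_is_P f)) eta_nat.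
  by rewrite (psiP _ _ (ophiinv mu x) (phiinv_is_phiinv mu x))
             (psi'P _ _ (ophiinv mu x) (phiinv_is_phiinv mu x)) eta_nat.
case=> eta_lin eta_M eta_psi; split=> // x y f v.
rewrite (pullup_decomp N_mod NP) (pullup_decomp N'_mod N'P) castV_fun.
rewrite (linear_fun_sum (eta_lin _)); congr (castV _ _).
by apply: eq_bigr => be _; rewrite eta_M eta_psi.
Qed.

End OrbitCategory.

Theorem mainTheorem15 (k : comPzRingType) (G : groupType) (C : kcat k)
    (A : gcat G C) :
  (forall (V : ob C -> lmodType k) (N : forall x y, ohom A x y -> V y -> V x),
     is_omod V N ->
     exists M : forall x y, chom C x y -> V y -> V x,
     exists psi : forall (mu : G) x, V x -> V (act A mu x),
       [/\ is_gmod V M psi, pullup V N M psi &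
           forall M' psi', pullup V N M' psi' -> M' = M /\ psi' = psi])
  /\ (forall (V : ob C -> lmodType k) (N N' : forall x y, ohom A x y -> V y -> V x)
        (M : forall x y, chom C x y -> V y -> V x)
        (psi : forall (mu : G) x, V x -> V (act A mu x)),
        is_omod V N -> is_omod V N' -> pullup V N M psi -> pullup V N' M psi ->
        N = N')
  /\ (forall (V : ob C -> lmodType k) (M : forall x y, chom C x y -> V y -> V x)
        (psi : forall (mu : G) x, V x -> V (act A mu x)),
        is_gmod V M psi ->
        exists N, is_omod V N /\ pullup V N M psi)
  /\ (forall (V V' : ob C -> lmodType k)
        (N : forall x y, ohom A x y -> V y -> V x)
        (N' : forall x y, ohom A x y -> V' y -> V' x)
        (M : forall x y, chom C x y -> V y -> V x)
        (psi : forall (mu : G) x, V x -> V (act A mu x))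
        (M' : forall x y, chom C x y -> V' y -> V' x)
        (psi' : forall (mu : G) x, V' x -> V' (act A mu x))
        (eta : forall x, V x -> V' x),
        is_omod V N -> is_omod V' N' ->
        pullup V N M psi -> pullup V' N' M' psi' ->
        (is_omor V V' N N' eta <-> is_gmor V V' M psi M' psi' eta)).
Proof.
split; [|split; [|split]].
- move=> V N N_mod; exists (pullM N), (pullpsi N).
  split; [exact: gmod_pull | exact: pullup_pull |].
  by move=> M' psi' /(pullup_unique (pullup_pull N_mod)) [<- <-].
- exact: pullup_inj.
- move=> V M psi M_gmod; exists (descent M psi).
  by split; [exact: omod_descent | exact: pullup_descent].
- by move=> V V' N N' M psi M' psi' eta; apply: pullup_mor.
Qed.
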